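(* For every stepwise NFTA $N$, the corresponding transition algebra $\mathcal{F}_N$ is a forest algebra.
   Context: A stepwise NFTA is $N=(Q,\Sigma,\delta,\mathsf{Init},q_0,q_F)$ with finite state set $Q$, $\delta\subseteq Q^3$. Its transition algebra is $\mathcal{F}_N=(H,V,\oplus_{HH},\oplus_{HV},\oplus_{VH},\odot_{VV},\odot_{VH},\mathrm{id}_Q,\mathrm{id}_{Q^2})$ with $H=2^{Q^2}$, $V=2^{(Q^2)^2}$, $\mathrm{id}_Q=\{(q,q)\mid q\in Q\}$, $\mathrm{id}_{Q^2}=\{((q_1,q_2),(q_1,q_2))\mid q_1,q_2\in Q\}$, and $F_1\oplus_{HH}F_2=\{(q_1,q_3)\mid (q_1,q_2)\in F_1,(q_2,q_3)\in F_2\}$; $C_1\odot_{VV}C_2=\{((q_1,q_2),(q_5,q_6))\mid ((q_1,q_2),(q_3,q_4))\in C_1,((q_3,q_4),(q_5,q_6))\in C_2\}$; $C\odot_{VH}F=\{(q_1,q_2)\mid((q_1,q_2),(q_3,q_4))\in C,(q_3,q_4)\in F\}$; $F\oplus_{HV}C=\{((q_1,q_3),(q_4,q_5))\mid (q_1,q_2)\in F,((q_2,q_3),(q_4,q_5))\in C\}$; $C\oplus_{VH}F=\{((q_1,q_5),(q_3,q_4))\mid((q_1,q_2),(q_3,q_4))\in C,(q_2,q_5)\in F\}$. A forest algebra is $(H,V,\oplus_{HH},\oplus_{HV},\oplus_{VH},\odot_{VV},\odot_{VH},\varepsilon,\Box)$ with monoids $(H,\oplus_{HH},\varepsilon)$,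 $(V,\odot_{VV},\Box)$, maps $\oplus_{HV}:H\times V\to V$, $\oplus_{VH}:V\times H\to V$, $\odot_{VH}:V\times H\to H$, satisfying for all $F_i\in H,C_i\in V$ (indices determined by sorts): $\varepsilon\oplus F_1=F_1=F_1\oplus\varepsilon$; $\varepsilon\oplus C_1=C_1=C_1\oplus\varepsilon$; $\Box\odot C_1=C_1=C_1\odot\Box$; $\Box\odot F_1=F_1$; $(F_1\oplus F_2)\oplus F_3=F_1\oplus(F_2\oplus F_3)$; $(F_1\oplus F_2)\oplus C_1=F_1\oplus(F_2\oplus C_1)$; $(C_1\oplus F_1)\oplus F_2=C_1\oplus(F_1\oplus F_2)$; $(F_1\oplus C_1)\oplus F_2=F_1\oplus(C_1\oplus F_2)$; $(C_1\odot C_2)\odot C_3=C_1\odot(C_2\odot C_3)$; $(C_1\odot C_2)\odot F_1=C_1\odot(C_2\odot F_1)$; $(F_1\oplus C_1)\odot F_2=F_1\oplus(C_1\odot F_2)$; $(F_1\oplus C_1)\odot C_2=F_1\oplus(C_1\odot C_2)$; $(C_1\oplus F_1)\odot F_2=(C_1\odot F_2)\oplus F_1$; $(C_1\oplus F_1)\odot C_2=(C_1\odot C_2)\oplus F_1$. *)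

From mathcomp Require Import all_boot.
Set Implicit Arguments. Unset Strict Implicit. Unset Printing Implicit Defensive.

Record stepwise_nfta (Q Sigma : finType) := StepwiseNFTA {
  nfta_delta : {set Q * Q * Q};
  nfta_Init  : {set Sigma * Q};
  nfta_q0    : Q;
  nfta_qF    : Q }.

Definition is_forest_algebra (H V : Type)
  (addHH : H -> H -> H) (addHV : H -> V -> V) (addVH : V -> H -> V)
  (compVV : V -> V -> V) (compVH : V -> H -> H) (eps : H) (box : V) : Prop :=
  (forall F1, addHH eps F1 = F1 /\ addHH F1 eps = F1) /\
      (forall C1, addHV eps C1 = C1 /\ addVH C1 eps = C1) /\
      (forall C1, compVV box C1 = C1 /\ compVV C1 box = C1) /\
      (forall F1, compVH box F1 = F1) /\
      (forall F1 F2 F3, addHH (addHH F1 F2) F3 = addHH F1 (addHH F2 F3)) /\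
      (forall F1 F2 C1, addHV (addHH F1 F2) C1 = addHV F1 (addHV F2 C1)) /\
      (forall C1 F1 F2, addVH (addVH C1 F1) F2 = addVH C1 (addHH F1 F2)) /\
      (forall F1 C1 F2, addVH (addHV F1 C1) F2 = addHV F1 (addVH C1 F2)) /\
      (forall C1 C2 C3, compVV (compVV C1 C2) C3 = compVV C1 (compVV C2 C3)) /\
      (forall C1 C2 F1, compVH (compVV C1 C2) F1 = compVH C1 (compVH C2 F1)) /\
      (forall F1 C1 F2, compVH (addHV F1 C1) F2 = addHH F1 (compVH C1 F2)) /\
      (forall F1 C1 C2, compVV (addHV F1 C1) C2 = addHV F1 (compVV C1 C2)) /\
      (forall C1 F1 F2, compVH (addVH C1 F1) F2 = addHH (compVH C1 F2) F1) /\
      (forall C1 F1 C2, compVV (addVH C1 F1) C2 = addVH (compVV C1 C2) F1).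

Section TransitionAlgebra.
Variable Q : finType.

Definition tH := {set Q * Q}.
Definition tV := {set (Q * Q) * (Q * Q)}.

Definition ta_addHH (F1 F2 : tH) : tH :=
  [set p : Q * Q | [exists q2 : Q, ((p.1, q2) \in F1) && ((q2, p.2) \in F2)]].

Definition ta_compVV (C1 C2 : tV) : tV :=
  [set c : (Q * Q) * (Q * Q) |
    [exists r : Q * Q, ((c.1, r) \in C1) && ((r, c.2) \in C2)]].

Definition ta_compVH (C : tV) (F : tH) : tH :=
  [set p : Q * Q | [exists r : Q * Q, ((p, r) \in C) && (r \in F)]].

(* F ⊕_HV C = {((q1,q3),(q4,q5)) | (q1,q2) ∈ F, ((q2,q3),(q4,q5)) ∈ C} *)
Definition ta_addHV (F : tH) (C : tV) : tV :=
  [set c : (Q * Q) * (Q * Q) |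
    [exists q2 : Q, ((c.1.1, q2) \in F) && (((q2, c.1.2), c.2) \in C)]].

(* C ⊕_VH F = {((q1,q5),(q3,q4)) | ((q1,q2),(q3,q4)) ∈ C, (q2,q5) ∈ F} *)
Definition ta_addVH (C : tV) (F : tH) : tV :=
  [set c : (Q * Q) * (Q * Q) |
    [exists q2 : Q, (((c.1.1, q2), c.2) \in C) && ((q2, c.1.2) \in F)]].

Definition ta_idQ : tH := [set p : Q * Q | p.1 == p.2].
Definition ta_idQ2 : tV := [set c : (Q * Q) * (Q * Q) | c.1 == c.2].

End TransitionAlgebra.

(* The transition algebra of a stepwise NFTA (it depends only on Q). *)
Definition transition_algebra_is_forest_algebra
  (Q Sigma : finType) (N : stepwise_nfta Q Sigma) : Prop :=
  @is_forest_algebra (tH Q) (tV Q) (@ta_addHH Q) (@ta_addHV Q) (@ta_addVH Q)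
    (@ta_compVV Q) (@ta_compVH Q) (ta_idQ Q) (ta_idQ2 Q).

From mathcomp Require Import all_boot.

(* Read a context [C : tV] as a binary relation on [Q * Q] and a forest
   [F : tH] as a binary relation on [Q].  Then both products [⊙_VV] and
   [⊕_HH] are relational composition, [⊙_VH] is the preimage of a set under a
   relation, and the horizontal concatenations are compositions with product
   relations: [F ⊕_HV C = (F × id) ; C] and [C ⊕_VH F = (id × F^-1) ; C].
   Every forest algebra axiom then reduces to associativity and unit laws of
   composition, the interchange law
   [(R1 ; R2) × (S1 ; S2) = (R1 × S1) ; (R2 × S2)], and the contravariance of
   relational inversion. *)

Set Implicit Arguments.
Unset Strict Implicit.
Unset Printing Implicit Defensive.

Definition rel_id (A : finType) : {set A * A} := [set p | p.1 == p.2].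

Definition rel_comp (A B C : finType) (R : {set A * B}) (S : {set B * C})
    : {set A * C} :=
  [set p | [exists b, ((p.1, b) \in R) && ((b, p.2) \in S)]].

Definition rel_inv (A B : finType) (R : {set A * B}) : {set B * A} :=
  [set p | (p.2, p.1) \in R].

Definition rel_prod (A B C D : finType) (R : {set A * B}) (S : {set C * D})
    : {set (A * C) * (B * D)} :=
  [set p | ((p.1.1, p.2.1) \in R) && ((p.1.2, p.2.2) \in S)].

Definition rel_pre (A B : finType) (R : {set A * B}) (P : {set B}) : {set A} :=
  [set a | [exists b, ((a, b) \in R) && (b \in P)]].

Lemma in_rel_id (A : finType) (a a' : A) : ((a, a') \in rel_id A) = (a == a').
Proof. by rewrite inE. Qed.

Lemma rel_compP (A B C : finType) (R : {set A * B}) (S : {set B * C}) a c :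
  reflect (exists2 b, (a, b) \in R & (b, c) \in S) ((a, c) \in rel_comp R S).
Proof.
rewrite inE; apply: (iffP existsP) => -[b]; first by case/andP; exists b.
by exists b; apply/andP.
Qed.

Lemma in_rel_inv (A B : finType) (R : {set A * B}) a b :
  ((b, a) \in rel_inv R) = ((a, b) \in R).
Proof. by rewrite inE. Qed.

Lemma in_rel_prod (A B C D : finType) (R : {set A * B}) (S : {set C * D}) a b c d :
  (((a, c), (b, d)) \in rel_prod R S) = ((a, b) \in R) && ((c, d) \in S).
Proof. by rewrite inE. Qed.

Lemma rel_preP (A B : finType) (R : {set A * B}) (P : {set B}) a :
  reflect (exists2 b, (a, b) \in R & b \in P) (a \in rel_pre R P).
Proof.
rewrite inE; apply: (iffP existsP) => -[b]; first by case/andP; exists b.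
by exists b; apply/andP.
Qed.

Lemma rel_comp_idl (A B : finType) (R : {set A * B}) : rel_comp (rel_id A) R = R.
Proof.
apply/setP => -[a b]; apply/rel_compP/idP => [[a' /[!in_rel_id]/eqP-> //] | Rab].
by exists a; rewrite ?in_rel_id.
Qed.

Lemma rel_comp_idr (A B : finType) (R : {set A * B}) : rel_comp R (rel_id B) = R.
Proof.
apply/setP => -[a b]; apply/rel_compP/idP => [[b' Rab' /[!in_rel_id]/eqP<- //] | Rab].
by exists b; rewrite ?in_rel_id.
Qed.

Lemma rel_compA (A B C D : finType)
    (R : {set A * B}) (S : {set B * C}) (T : {set C * D}) :
  rel_comp (rel_comp R S) T = rel_comp R (rel_comp S T).
Proof.
apply/setP => -[a d]; apply/rel_compP/rel_compP.
  by case=> c /rel_compP[b Rab Sbc] Tcd; exists b => //; apply/rel_compP; exists c.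
by case=> b Rab /rel_compP[c Sbc Tcd]; exists c => //; apply/rel_compP; exists b.
Qed.

Lemma rel_inv_id (A : finType) : rel_inv (rel_id A) = rel_id A.
Proof. by apply/setP => -[a a']; rewrite in_rel_inv !in_rel_id eq_sym. Qed.

Lemma rel_invK (A B : finType) (R : {set A * B}) : rel_inv (rel_inv R) = R.
Proof. by apply/setP => -[a b]; rewrite !in_rel_inv. Qed.

Lemma rel_inv_comp (A B C : finType) (R : {set A * B}) (S : {set B * C}) :
  rel_inv (rel_comp R S) = rel_comp (rel_inv S) (rel_inv R).
Proof.
apply/setP => -[c a]; rewrite in_rel_inv.
apply/rel_compP/rel_compP => -[b]; first by exists b; rewrite in_rel_inv.
by rewrite !in_rel_inv; exists b.
Qed.

Lemma rel_prod_id (A B : finType) : rel_prod (rel_id A) (rel_id B) = rel_id (A * B)%type.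
Proof.
apply/setP => -[[a b] [a' b']].
by rewrite in_rel_prod !in_rel_id xpair_eqE.
Qed.

Lemma rel_prod_comp (A B C D E F : finType) (R1 : {set A * B}) (R2 : {set B * C})
    (S1 : {set D * E}) (S2 : {set E * F}) :
  rel_prod (rel_comp R1 R2) (rel_comp S1 S2)
  = rel_comp (rel_prod R1 S1) (rel_prod R2 S2).
Proof.
apply/setP => -[[a d] [c f]]; rewrite in_rel_prod.
apply/andP/rel_compP => [[/rel_compP[b R1ab R2bc] /rel_compP[e S1de S2ef]] | ].
  by exists (b, e); rewrite in_rel_prod; apply/andP.
case=> -[b e] /[!in_rel_prod] /andP[R1ab S1de] /andP[R2bc S2ef].
by split; apply/rel_compP; [exists b | exists e].
Qed.

Lemma rel_pre_id (A : finType) (P : {set A}) : rel_pre (rel_id A) P = P.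
Proof.
apply/setP => a; apply/rel_preP/idP => [[a' /[!in_rel_id]/eqP-> //] | Pa].
by exists a; rewrite ?in_rel_id.
Qed.

Lemma rel_pre_comp (A B C : finType) (R : {set A * B}) (S : {set B * C}) (P : {set C}) :
  rel_pre (rel_comp R S) P = rel_pre R (rel_pre S P).
Proof.
apply/setP => a; apply/rel_preP/rel_preP.
  by case=> c /rel_compP[b Rab Sbc] Pc; exists b => //; apply/rel_preP; exists c.
by case=> b Rab /rel_preP[c Sbc Pc]; exists c => //; apply/rel_compP; exists b.
Qed.

Lemma rel_pre_prod (A B C D : finType)
    (R : {set A * B}) (S : {set C * D}) (P : {set B * D}) :
  rel_pre (rel_prod R S) P = rel_comp R (rel_comp P (rel_inv S)).
Proof.
apply/setP => -[a c]; apply/rel_preP/rel_compP.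
  case=> -[b d] /[!in_rel_prod] /andP[Rab Scd] Pbd.
  by exists b => //; apply/rel_compP; exists d; rewrite ?in_rel_inv.
case=> b Rab /rel_compP[d Pbd /[!in_rel_inv] Scd].
by exists (b, d); rewrite ?in_rel_prod ?Rab.
Qed.

Section TransitionAlgebraAsRelations.

Variable Q : finType.
Implicit Types (F : tH Q) (C : tV Q).

Lemma ta_addHHE F1 F2 : ta_addHH F1 F2 = rel_comp F1 F2.
Proof. by []. Qed.

Lemma ta_compVVE C1 C2 : ta_compVV C1 C2 = rel_comp C1 C2.
Proof. by []. Qed.

Lemma ta_compVHE C F : ta_compVH C F = rel_pre C F.
Proof. by []. Qed.

Lemma ta_idQE : ta_idQ Q = rel_id Q.
Proof. by []. Qed.

Lemma ta_idQ2E : ta_idQ2 Q = rel_id (Q * Q)%type.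
Proof. by []. Qed.

Lemma ta_addHVE F C : ta_addHV F C = rel_comp (rel_prod F (rel_id Q)) C.
Proof.
apply/setP => -[[q1 q3] c]; rewrite inE /=.
apply/existsP/rel_compP => [[q2 /andP[Fq12 Cq23]] | ].
  by exists (q2, q3) => //; rewrite in_rel_prod Fq12 in_rel_id eqxx.
case=> -[q2 q3'] /[!in_rel_prod] /andP[Fq12 /[!in_rel_id]/eqP<-] Cq23.
by exists q2; apply/andP.
Qed.

Lemma ta_addVHE C F : ta_addVH C F = rel_comp (rel_prod (rel_id Q) (rel_inv F)) C.
Proof.
apply/setP => -[[q1 q5] c]; rewrite inE /=.
apply/existsP/rel_compP => [[q2 /andP[Cq12 Fq25]] | ].
  by exists (q1, q2) => //; rewrite in_rel_prod in_rel_id eqxx in_rel_inv.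
case=> -[q1' q2] /[!in_rel_prod] /andP[/[!in_rel_id]/eqP<- /[!in_rel_inv] Fq25] Cq12.
by exists q2; apply/andP.
Qed.

Definition ta_relE :=
  (ta_addHHE, ta_compVVE, ta_compVHE, ta_idQE, ta_idQ2E, ta_addHVE, ta_addVHE).

End TransitionAlgebraAsRelations.

Theorem lemma4p3 (Q Sigma : finType) (N : stepwise_nfta Q Sigma) :
  transition_algebra_is_forest_algebra N.
Proof.
rewrite /transition_algebra_is_forest_algebra /is_forest_algebra.
repeat split=> *; rewrite ?ta_relE.
- exact: rel_comp_idl.
- exact: rel_comp_idr.
- by rewrite rel_prod_id rel_comp_idl.
- by rewrite rel_inv_id rel_prod_id rel_comp_idl.
- exact: rel_comp_idl.
- exact: rel_comp_idr.
- exact: rel_pre_id.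
- exact: rel_compA.
- by rewrite -rel_compA -rel_prod_comp rel_comp_idl.
- by rewrite -rel_compA -rel_prod_comp rel_comp_idl rel_inv_comp.
- by rewrite -!rel_compA -!rel_prod_comp !rel_comp_idl !rel_comp_idr.
- exact: rel_compA.
- exact: rel_pre_comp.
- by rewrite rel_pre_comp rel_pre_prod rel_inv_id !rel_comp_idr.
- exact: rel_compA.
- by rewrite rel_pre_comp rel_pre_prod rel_invK rel_comp_idl.
- exact: rel_compA.
Qed.
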